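(* For every atomic hypergraph $H$, the union of all constructions of $H$ equals the saturated closure $\bar H$ of $H$; i.e. $\bigcup\mathcal C(H)=\bar H$, where $\mathcal C(H)$ is the set of constructions of $H$.
   Context: A hypergraph is a finite set $H$ of nonempty subsets of some finite set; its carrier is $\bigcup H$. For a family $F$ and a set $Y$, $F_Y=\{X\in F\mid X\subseteq Y\}$. A hypergraph partition of $H$ is a partition $\{H_1,\dots,H_n\}$ ($n\ge0$) of the set $H$ such that $\{\bigcup H_1,\dots,\bigcup H_n\}$ is a partition of $\bigcup H$; $H$ is connected if it has exactly one hypergraph partition. Every hypergraph has a unique finest hypergraph partition, i.e. one all of whose blocks are connected. $H$ is atomic if $\{x\}\in H$ for every $x\in\bigcup H$. Constructions of an atomic hypergraph $H$ are defined by induction on $|\bigcup H|$: (0) $\emptyset$ is the only construction of the empty hypergraph; (1) if $|\bigcup H|\ge1$, $H$ is connected, $x\in\bigcup H$ and $K$ is a construction of $H_{\bigcup H\setminus\{x\}}$, then $K\cup\{\bigcup H\}$ is a construction of $H$; (2) if $H$ is not connected with finest hypergraph partition $\{H_1,\dots,H_n\}$, $n\ge2$, and $K_i$ is a construction of $H_i$ for each $i$, then $K_1\cup\dots\cup K_n$ is a construction of $H$. $H$ is saturated if $X_1,X_2\in H$ and $X_1\cap X_2\neq\emptyset$ imply $X_1\cup X_2\in H$. $Y\subseteq\bigcup H$ is dispensable in $H$ when $H_Y\setminus\{Y\}$ is a connected hypergraph with carrier $Y$; $H\cup\{Y\}$ enhances $H$ when $Y$ is dispensable in $H$ and $Y\notin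 H$; hypergraphs on the same carrier are cognate when related by the equivalence relation generated by enhancement. The saturated closure $\bar H$ of $H$ is the (unique) saturated hypergraph cognate to $H$, equal to the union of all hypergraphs cognate to $H$. *)

From HB Require Import structures.
From mathcomp Require Import all_boot.
From Stdlib Require Import Relations.
Set Implicit Arguments. Unset Strict Implicit. Unset Printing Implicit Defensive.

Section Hyper.
Variable T : finType.
Implicit Types (H K B : {set {set T}}) (X Y : {set T}).

Definition hypergraph H : bool := set0 \notin H.

Definition carrier H : {set T} := cover H.

Definition restrict H Y : {set {set T}} := [set X in H | X \subset Y].

(* hypergraph partition: a partition P of the set H whose blocks have
   pairwise disjoint carriers (hence the carriers partition \bigcup H) *)
Definition hpartition H (P : {set {set {set T}}}) : bool :=
  partition P H &&
  [forall B1 in P, forall B2 in P,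
     (B1 != B2) ==> [disjoint carrier B1 & carrier B2]].

Definition connected H : bool :=
  #|[set P : {set {set {set T}}} | hpartition H P]| == 1.

Definition finest_hpartition H (P : {set {set {set T}}}) : bool :=
  hpartition H P && [forall B in P, connected B].

Definition atomic H : bool := [forall x in carrier H, [set x] \in H].

Inductive construction : {set {set T}} -> {set {set T}} -> Prop :=
| constr_empty : construction set0 set0
| constr_conn : forall H x K,
    atomic H -> carrier H != set0 -> connected H -> x \in carrier H ->
    construction (restrict H (carrier H :\ x)) K ->
    construction H (K :|: [set carrier H])
| constr_disc : forall H (P : {set {set {set T}}}) (Ks : {set {set T}} -> {set {set T}}),
    atomic H -> ~~ connected H -> finest_hpartition H P -> 1 < #|P| ->
    (forall B, B \in P -> construction B (Ks B)) ->
    construction H (\bigcup_(B in P) Ks B).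

Definition saturated H : bool :=
  [forall X1 in H, forall X2 in H,
     (X1 :&: X2 != set0) ==> (X1 :|: X2 \in H)].

Definition dispensable H Y : bool :=
  (Y \subset carrier H) && connected (restrict H Y :\ Y)
  && (carrier (restrict H Y :\ Y) == Y).

(* H2 = H1 ∪ {Y} enhances H1 (Y nonempty, so H2 is again a hypergraph) *)
Definition enhances (H1 H2 : {set {set T}}) : Prop :=
  exists Y, [/\ Y != set0, dispensable H1 Y, Y \notin H1 & H2 = H1 :|: [set Y]].

Definition cognate : relation {set {set T}} := clos_refl_sym_trans _ enhances.

End Hyper.

From HB Require Import structures.
From mathcomp Require Import all_boot.
From Stdlib Require Import Relations.
Set Implicit Arguments. Unset Strict Implicit. Unset Printing Implicit Defensive.

(* Call X a connected set of H when H_X is connected with carrier X.  Adding a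
   dispensable Y never changes which H_X are connected (H_Y already glues
   everything that Y glues), so cognate hypergraphs have the same connected
   sets; in a saturated hypergraph the connected sets are exactly the members,
   since a member M of H_X of maximal size absorbs every member it meets.
   Enhancing by X1 :|: X2 for meeting members whose union is missing reaches a
   saturated cognate.  Finally, by induction along the two rules, the members
   of constructions are exactly the connected sets: rule (1) adds the carrier
   and every proper connected set avoids some vertex x, while for rule (2)
   every connected set lies inside a single block of the finest partition. *)

Section Hypergraphs.
Variable T : finType.
Implicit Types (H F G A B C : {set {set T}}) (X Y Z W : {set T}).
Implicit Types (P Q : {set {set {set T}}}).

Lemma carrierP H x : reflect (exists2 Z, Z \in H & x \in Z) (x \in carrier H).
Proof. exact: bigcupP. Qed.

Lemma sub_carrier H Z : Z \in H -> Z \subset carrier H.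
Proof. exact: bigcup_sup. Qed.

Lemma carrierS H F : H \subset F -> carrier H \subset carrier F.
Proof. by move=> sHF; apply/bigcupsP=> Z /(subsetP sHF)/sub_carrier. Qed.

Lemma carrier0 : carrier (set0 : {set {set T}}) = set0.
Proof. exact: big_set0. Qed.

Lemma carrierU1 X H : carrier (X |: H) = X :|: carrier H.
Proof. by rewrite /carrier /cover bigcup_setU big_set1. Qed.

Lemma subset_not_disjoint X Y : X != set0 -> X \subset Y -> ~~ [disjoint X & Y].
Proof. by move=> X0 sXY; apply: contra X0; rewrite -setI_eq0 (setIidPl sXY). Qed.

Lemma restrictE H Y Z : (Z \in restrict H Y) = (Z \in H) && (Z \subset Y).
Proof. by rewrite inE. Qed.

Lemma restrict_sub H Y : restrict H Y \subset H.
Proof. by apply/subsetP=> Z; rewrite restrictE => /andP[]. Qed.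

Lemma carrier_restrict H Y : carrier (restrict H Y) \subset Y.
Proof. by apply/bigcupsP=> Z; rewrite restrictE => /andP[]. Qed.

Lemma restrict_restrict H Y Z : Y \subset Z -> restrict (restrict H Z) Y = restrict H Y.
Proof.
move=> sYZ; apply/setP=> W; rewrite !restrictE -andbA.
by apply: andb_id2l => _; apply/andP/idP => [[] | sWY]; last rewrite (subset_trans sWY).
Qed.

Lemma restrict_carrier H : restrict H (carrier H) = H.
Proof. by apply/setP=> W; rewrite restrictE andb_idr // => /sub_carrier. Qed.

Lemma hypergraph_neq0 H Z : hypergraph H -> Z \in H -> Z != set0.
Proof. by move=> hH ZH; apply: contraNneq hH => <-. Qed.

Lemma hypergraphS H F : F \subset H -> hypergraph H -> hypergraph F.
Proof. by move=> sFH; apply: contra; apply: (subsetP sFH). Qed.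

Lemma hypergraphU1 H Y : hypergraph (H :|: [set Y]) = hypergraph H && (Y != set0).
Proof. by rewrite /hypergraph in_setU in_set1 negb_or eq_sym. Qed.

Lemma hypergraph_carrier_eq0 H : hypergraph H -> (carrier H == set0) = (H == set0).
Proof.
move=> hH; apply/eqP/eqP=> [c0 | ->]; last exact: carrier0.
apply/setP=> W; rewrite inE; apply/negP=> WH.
by move: (hypergraph_neq0 hH WH); rewrite -subset0 -c0 sub_carrier.
Qed.

Lemma hpartition_sub H P B : hpartition H P -> B \in P -> B \subset H.
Proof. by case/andP=> /and3P[/eqP <- _ _] _; apply: bigcup_sup. Qed.

Lemma hpartition_cover H P Z : hpartition H P -> Z \in H -> exists2 B, B \in P & Z \in B.
Proof. by case/andP=> /and3P[/eqP <- _ _] _ /bigcupP. Qed.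

Lemma hpartition_disjoint H P B1 B2 : hpartition H P -> B1 \in P -> B2 \in P ->
  B1 != B2 -> [disjoint carrier B1 & carrier B2].
Proof.
case/andP=> _ /forall_inP hP B1P B2P.
by apply/implyP; move/forall_inP: (hP B1 B1P); apply.
Qed.

Lemma hpartition_set0 H P : hpartition H P -> set0 \notin P.
Proof. by case/andP=> /and3P[]. Qed.

Lemma hpartition_split H P B : hpartition H P -> B \in P ->
  [disjoint carrier B & carrier (H :\: B)].
Proof.
move=> hP BP; rewrite disjoint_sym disjoints_subset; apply/bigcupsP=> W.
rewrite inE => /andP[WnB WH]; have [B' B'P WB'] := hpartition_cover hP WH.
have neBB' : B != B' by apply: contraNneq WnB => ->.
rewrite -disjoints_subset (disjointWl (sub_carrier WB')) //.
by rewrite disjoint_sym (hpartition_disjoint hP).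
Qed.

Lemma hpartitionI H P : cover P = H -> trivIset P -> set0 \notin P ->
  {in P &, forall B1 B2, B1 != B2 -> [disjoint carrier B1 & carrier B2]} ->
  hpartition H P.
Proof.
move=> cP tP P0 dP; apply/andP; split; first by rewrite /partition cP eqxx tP.
by apply/forall_inP=> B1 B1P; apply/forall_inP=> B2 B2P; apply/implyP; apply: dP.
Qed.

Definition trivial_hpartition H : {set {set {set T}}} :=
  if H == set0 then set0 else [set H].

Lemma hpartition_trivial H : hpartition H (trivial_hpartition H).
Proof.
rewrite /trivial_hpartition; case: eqP => [-> | /eqP H0].
  apply: hpartitionI => [|||B]; rewrite ?inE //; first exact: big_set0.
  by apply/trivIsetP=> B; rewrite inE.
apply: hpartitionI => [|||B1 B2]; rewrite ?cover1 ?inE 1?eq_sym //.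
  by apply/trivIsetP=> B1 B2; rewrite !inE => /eqP-> /eqP->; rewrite eqxx.
by move=> /eqP-> /eqP->; rewrite eqxx.
Qed.

Definition unsplittable H := forall A, A \subset H ->
  [disjoint carrier A & carrier (H :\: A)] -> A = set0 \/ A = H.

Lemma hpartition_pair H A : A \subset H -> A != set0 -> A != H ->
  [disjoint carrier A & carrier (H :\: A)] -> hpartition H [set A; H :\: A].
Proof.
move=> sAH A0 AH dA.
have D0 : H :\: A != set0 by rewrite setD_eq0; apply: contra AH => sHA; rewrite eqEsubset sAH.
apply: hpartitionI.
- by rewrite /cover bigcup_setU !big_set1 -{1}(setIidPr sAH) setID.
- apply/trivIsetP=> B1 B2; rewrite !inE => /orP[]/eqP-> /orP[]/eqP->; rewrite ?eqxx //.
    by move=> _; rewrite -setI_eq0 setIDA setD_eq0 subsetIl.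
  by move=> _; rewrite -setI_eq0 setIC setIDA setD_eq0 subsetIl.
- by rewrite !inE !(eq_sym set0) negb_or A0.
move=> B1 B2; rewrite !inE => /orP[]/eqP-> /orP[]/eqP->; rewrite ?eqxx // => _.
by rewrite disjoint_sym.
Qed.

Lemma unsplittable_hpartition H P :
  unsplittable H -> hpartition H P -> P = trivial_hpartition H.
Proof.
move=> nsH hP; have sPH : P \subset [set H].
  apply/subsetP=> B BP; rewrite inE.
  have [B0 | -> //] := nsH B (hpartition_sub hP BP) (hpartition_split hP BP).
  by move: (hpartition_set0 hP); rewrite -B0 BP.
have cPH : cover P = H by case/andP: hP => /and3P[/eqP].
rewrite /trivial_hpartition; move: sPH; rewrite subset1 => /orP[]/eqP PE.
  by move: (hpartition_set0 hP); rewrite PE inE eq_sym => /negbTE->.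
by move: cPH; rewrite PE /cover big_set0 => <-; rewrite eqxx.
Qed.

Lemma connectedP H : connected H <-> unsplittable H.
Proof.
split=> [/cards1P[P0 eP] A sAH dA | nsH]; last first.
  apply/cards1P; exists (trivial_hpartition H); apply/setP=> P; rewrite !inE.
  by apply/idP/eqP=> [/(unsplittable_hpartition nsH) | ->]; last exact: hpartition_trivial.
have inP0 P : hpartition H P -> P = P0 by move=> hP; apply/set1P; rewrite -eP inE.
have [-> | A0] := eqVneq A set0; first by left.
have [-> | AH] := eqVneq A H; first by right.
have H0 : H != set0 by apply: contraNneq A0 => H0; rewrite -subset0 -H0.
have := inP0 _ (hpartition_trivial H).
rewrite -(inP0 _ (hpartition_pair sAH A0 AH dA)) /trivial_hpartition (negbTE H0).
by move/setP/(_ A); rewrite !inE eqxx (negbTE AH).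
Qed.

Lemma unsplittable1 X : unsplittable [set X].
Proof. by move=> A; rewrite subset1 => /orP[]/eqP-> _; [right | left]. Qed.

Lemma unsplittable_side F G A : unsplittable G -> G \subset F -> A \subset F ->
  [disjoint carrier A & carrier (F :\: A)] -> G \subset A \/ G \subset F :\: A.
Proof.
move=> nsG sGF sAF dA.
have sGDF : G :\: (G :&: A) \subset F :\: A.
  apply/subsetP=> Z; rewrite !inE negb_and => /andP[nZGA ZG].
  by rewrite (subsetP sGF) // andbT; rewrite ZG in nZGA.
have dGA := disjointW (carrierS (subsetIr G A)) (carrierS sGDF) dA.
have [GA0 | GAG] := nsG _ (subsetIl G A) dGA.
  by right; rewrite -(setD0 G) -GA0.
by left; rewrite -GAG subsetIr.
Qed.

Lemma unsplittable_grow F G : unsplittable G -> G \subset F ->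
  (forall W, W \in F -> ~~ [disjoint W & carrier G]) -> unsplittable F.
Proof.
move=> nsG sGF meetG A sAF dA.
case: (unsplittable_side nsG sGF sAF dA) => sG.
  right; apply/eqP; rewrite eqEsubset sAF; apply/subsetP=> W WF; apply: contraT => WnA.
  have WFA : W \in F :\: A by rewrite inE WnA.
  rewrite disjoint_sym in dA; move: (meetG W WF).
  by rewrite (disjointW (sub_carrier WFA) (carrierS sG) dA).
left; apply/eqP; rewrite -subset0; apply/subsetP=> W WA.
by move: (meetG W (subsetP sAF W WA)); rewrite (disjointW (sub_carrier WA) (carrierS sG) dA).
Qed.

Lemma unsplittable_shrink F G Y : unsplittable G -> G \subset F -> carrier G = Y ->
  Y \notin F -> unsplittable (Y |: F) -> unsplittable F.
Proof.
move=> nsG sGF cGY YnF nsYF A sAF dA.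
have sAYF : A \subset Y |: F by rewrite (subset_trans sAF) ?subsetUr.
case: (unsplittable_side nsG sGF sAF dA) => sG.
  have sYA : carrier (Y |: A) \subset carrier A.
    by rewrite carrierU1 subUset subxx -cGY carrierS.
  have sYFA : carrier ((Y |: F) :\: (Y |: A)) \subset carrier (F :\: A).
    apply: carrierS; apply/subsetP=> W; rewrite !inE negb_or => /andP[/andP[WnY WnA]].
    by rewrite (negbTE WnY) WnA.
  have [/setP/(_ Y) | eYA] := nsYF _ (setUS [set Y] sAF) (disjointW sYA sYFA dA).
    by rewrite !inE eqxx.
  right; apply/eqP; rewrite eqEsubset sAF; apply/subsetP=> W WF.
  have : W \in Y |: A by rewrite eYA inE WF orbT.
  by case/setU1P=> [WY | //]; rewrite -WY WF in YnF.
have sYFA : carrier ((Y |: F) :\: A) \subset carrier (F :\: A).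
  apply/bigcupsP=> W; rewrite !inE => /andP[WnA /orP[/eqP-> | WF]].
    by rewrite -cGY carrierS.
  by apply: sub_carrier; rewrite inE WnA.
have [A0 | AYF] := nsYF _ sAYF (disjointWr sYFA dA); first by left.
by move: YnF; rewrite (subsetP sAF) // AYF setU11.
Qed.

Definition connected_set H X :=
  [/\ X != set0, unsplittable (restrict H X) & carrier (restrict H X) = X].

Lemma connected_set_sub H X : connected_set H X -> X \subset carrier H.
Proof. by case=> _ _ <-; apply/carrierS/restrict_sub. Qed.

Lemma connected_set_restrict H Y X : X \subset Y ->
  connected_set (restrict H Y) X <-> connected_set H X.
Proof. by move=> sXY; rewrite /connected_set restrict_restrict. Qed.

Lemma connected_set_restrictW H Y X : connected_set (restrict H Y) X -> connected_set H X.
Proof.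
move=> cYX; have sXY := subset_trans (connected_set_sub cYX) (carrier_restrict H Y).
exact/(connected_set_restrict H sXY).
Qed.

Lemma mem_connected_set H X : hypergraph H -> X \in H -> connected_set H X.
Proof.
move=> hH XH; have XHX : X \in restrict H X by rewrite restrictE XH subxx.
split; first exact: hypergraph_neq0 hH XH.
  apply: (unsplittable_grow (@unsplittable1 X)); first by rewrite sub1set.
  move=> W; rewrite restrictE /carrier cover1 => /andP[WH sWX].
  exact: subset_not_disjoint (hypergraph_neq0 hH WH) sWX.
by apply/eqP; rewrite eqEsubset carrier_restrict sub_carrier.
Qed.

Lemma saturated_maximal H X M : saturated H -> M \in restrict H X ->
    (forall W, W \in restrict H X -> #|W| <= #|M|) ->
  forall W, W \in restrict H X -> ~~ [disjoint W & M] -> W \subset M.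
Proof.
move=> /forall_inP satH MHX maxM W WHX meetWM.
move: (MHX) (WHX); rewrite !restrictE => /andP[MH sMX] /andP[WH sWX].
have MWH : M :|: W \in H.
  by move/forall_inP: (satH M MH) => /(_ W WH)/implyP; apply; rewrite setI_eq0 disjoint_sym.
have /maxM : M :|: W \in restrict H X by rewrite restrictE MWH subUset sMX.
by move=> leMW; apply/setUidPl/eqP; rewrite eq_sym eqEcard subsetUl leMW.
Qed.

Lemma connected_set_mem H X : saturated H -> connected_set H X -> X \in H.
Proof.
move=> satH [X0 nsHX cHX]; set F := restrict H X.
have [Z ZF] : exists Z, Z \in F.
  by move: X0; rewrite -cHX => /set0Pn[x /carrierP[Z ZF _]]; exists Z.
have [M /= MF maxM] := @arg_maxnP _ Z [pred W | W \in F] (fun W => #|W|) ZF.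
set A := [set W in F | W \subset M].
have sAF : A \subset F by apply/subsetP=> W; rewrite inE => /andP[].
have cAM : carrier A \subset M by apply/bigcupsP=> W; rewrite inE => /andP[].
have dA : [disjoint carrier A & carrier (F :\: A)].
  rewrite disjoint_sym; apply: disjointWr cAM _; rewrite disjoints_subset.
  apply/bigcupsP=> W; rewrite in_setD [W \in A]inE negb_and => /andP[nWA WF].
  rewrite WF /= in nWA; rewrite -disjoints_subset; apply: contraR nWA.
  exact: saturated_maximal satH MF maxM W WF.
have MA : M \in A by rewrite inE MF subxx.
have [A0 | AF] := nsHX A sAF dA; first by rewrite A0 inE in MA.
have sXM : X \subset M by rewrite -cHX -AF.
move: MF; rewrite restrictE => /andP[MH sMX].
by have -> : X = M by apply/eqP; rewrite eqEsubset sXM.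
Qed.

Lemma restrictU1 H Y X :
  restrict (H :|: [set Y]) X = if Y \subset X then Y |: restrict H X else restrict H X.
Proof.
case: ifP => sYX; apply/setP=> W; rewrite ?in_setU1 !restrictE in_setU in_set1.
  by case: eqP => [-> | _]; rewrite ?sYX ?orbT ?orbF.
by case: eqP => [-> | _]; rewrite ?sYX ?andbF ?orbF.
Qed.

Lemma enhances_hypergraph H1 H2 : enhances H1 H2 -> hypergraph H2 = hypergraph H1.
Proof. by case=> Y [Y0 _ _ ->]; rewrite hypergraphU1 Y0 andbT. Qed.

Lemma enhances_connected_set H1 H2 X : hypergraph H1 -> enhances H1 H2 ->
  connected_set H1 X <-> connected_set H2 X.
Proof.
move=> hH1 [Y [Y0 /andP[/andP[_ conY] /eqP cY] YnH1 ->]].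
have eGY : restrict H1 Y :\ Y = restrict H1 Y.
  by apply/setDidPl; rewrite disjoint_sym disjoints1 restrictE (negbTE YnH1).
rewrite eGY in conY cY; move/connectedP: conY => nsG.
rewrite /connected_set restrictU1; case: ifP => [sYX | //].
have sGF : restrict H1 Y \subset restrict H1 X.
  by apply/subsetP=> W; rewrite !restrictE => /andP[-> /subset_trans->].
have sYF : Y \subset carrier (restrict H1 X) by rewrite -{1}cY carrierS.
rewrite carrierU1 (setUidPr sYF); split=> -[X0 nsF cF]; split=> //.
  apply: (unsplittable_grow nsF (subsetUr _ _)) => W /setU1P[-> | WF].
    exact: subset_not_disjoint Y0 sYF.
  apply: subset_not_disjoint (sub_carrier WF).
  exact: hypergraph_neq0 hH1 (subsetP (restrict_sub H1 X) W WF).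
by apply: (unsplittable_shrink nsG sGF cY); rewrite // restrictE (negbTE YnH1).
Qed.

Lemma cognate_hypergraph H1 H2 : cognate H1 H2 -> hypergraph H1 = hypergraph H2.
Proof.
elim=> {H1 H2} [H1 H2 /enhances_hypergraph -> | | H1 H2 _ -> | H1 H2 H3 _ -> _ ->] //.
Qed.

Lemma cognate_connected_set H1 H2 X : cognate H1 H2 -> hypergraph H1 ->
  connected_set H1 X <-> connected_set H2 X.
Proof.
elim=> {H1 H2} [H1 H2 | // | H1 H2 c12 IH hH2 | H1 H2 H3 c12 IH12 _ IH23 hH1].
- by move=> e12 hH1; apply: enhances_connected_set.
- by apply: iff_sym; apply: IH; rewrite (cognate_hypergraph c12).
by apply: iff_trans (IH12 hH1) (IH23 _); rewrite -(cognate_hypergraph c12).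
Qed.

Lemma enhancement_exists H : hypergraph H -> ~~ saturated H ->
  exists Y, [/\ Y != set0, dispensable H Y & Y \notin H].
Proof.
move=> hH /forall_inPn[X1 X1H /forall_inPn[X2 X2H]].
rewrite negb_imply setI_eq0 => /andP[meet12 YnH]; set Y := X1 :|: X2.
have X10 := hypergraph_neq0 hH X1H.
have cX12 : carrier [set X1; X2] = Y by rewrite carrierU1 /carrier cover1.
have ns12 : unsplittable [set X1; X2].
  apply: (unsplittable_grow (@unsplittable1 X1)); first by rewrite sub1set setU11.
  move=> W; rewrite /carrier cover1 => /set2P[-> | ->]; first exact: subset_not_disjoint.
  by rewrite disjoint_sym.
have s12 : [set X1; X2] \subset restrict H Y.
  by rewrite subUset !sub1set !restrictE X1H X2H subsetUl subsetUr.
have eGY : restrict H Y :\ Y = restrict H Y.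
  by apply/setDidPl; rewrite disjoint_sym disjoints1 restrictE (negbTE YnH).
exists Y; split=> //; first by rewrite setU_eq0 negb_and X10.
rewrite /dispensable eGY -andbA; apply/and3P; split; first by rewrite subUset !sub_carrier.
  apply/connectedP; apply: (unsplittable_grow ns12 s12) => W; rewrite restrictE cX12.
  by case/andP=> WH sWY; apply: subset_not_disjoint (hypergraph_neq0 hH WH) sWY.
by rewrite eqEsubset carrier_restrict -{1}cX12 carrierS.
Qed.

Lemma saturated_cognate_exists H : hypergraph H ->
  exists Hbar, saturated Hbar /\ cognate H Hbar.
Proof.
have [n] := ubnP #|~: H|; elim: n H => // n IH H ltHn hH.
have [satH | /(enhancement_exists hH)[Y [Y0 dispY YnH]]] := boolP (saturated H).
  by exists H; split=> //; apply: rst_refl.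
have hHY : hypergraph (H :|: [set Y]) by rewrite hypergraphU1 hH.
have ltHY : #|~: (H :|: [set Y])| < n.
  rewrite ltnS in ltHn; apply: leq_trans ltHn; apply: proper_card.
  by rewrite properC properUl // sub1set.
have [Hbar [satHbar cogHbar]] := IH _ ltHY hHY.
by exists Hbar; split=> //; apply: rst_trans cogHbar; apply: rst_step; exists Y.
Qed.

Lemma hpartition_restrict H P B X : hypergraph H -> hpartition H P -> B \in P ->
  X \subset carrier B -> restrict H X = restrict B X.
Proof.
move=> hH hP BP sXB; apply/setP=> W; rewrite !restrictE.
case WB: (W \in B); first by rewrite (subsetP (hpartition_sub hP BP)).
apply/andP=> -[WH sWX]; have [B' B'P WB'] := hpartition_cover hP WH.
have neBB' : B != B' by apply: contraFneq WB => ->.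
have := subset_not_disjoint (hypergraph_neq0 hH WH) (sub_carrier WB').
by rewrite (disjointWl (subset_trans sWX sXB) (hpartition_disjoint hP BP B'P neBB')).
Qed.

Lemma hpartition_connected_set H P B X : hypergraph H -> hpartition H P -> B \in P ->
  X \subset carrier B -> connected_set B X <-> connected_set H X.
Proof. by move=> hH hP BP sXB; rewrite /connected_set (hpartition_restrict hH hP BP sXB). Qed.

Lemma construction_connected_set H C X :
  construction H C -> hypergraph H -> X \in C -> connected_set H X.
Proof.
move=> cHC; elim: cHC X => {H C} [|H x K _ H0 conH _ _ IH | H P Ks _ _ /andP[hP _] _ _ IH].
all: move=> X hH.
- by rewrite inE.
- case/setUP=> [XK | /set1P ->].
    exact: connected_set_restrictW (IH X (hypergraphS (restrict_sub _ _) hH) XK).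
  by split; rewrite ?restrict_carrier //; apply/connectedP.
case/bigcupP=> B BP XKB; have hB := hypergraphS (hpartition_sub hP BP) hH.
have cBX := IH B BP X hB XKB.
exact/(hpartition_connected_set hH hP BP (connected_set_sub cBX)).
Qed.

Lemma trivIset_hpartition H P : hypergraph H -> (forall B, B \in P -> B \subset H) ->
  {in P &, forall B1 B2, B1 != B2 -> [disjoint carrier B1 & carrier B2]} -> trivIset P.
Proof.
move=> hH sPH dP; apply/trivIsetP=> B1 B2 B1P B2P neB12.
rewrite -setI_eq0; apply/set0Pn=> -[W /setIP[WB1 WB2]].
have := subset_not_disjoint (hypergraph_neq0 hH (subsetP (sPH _ B1P) W WB1)) (sub_carrier WB2).
by rewrite (disjointWl (sub_carrier WB1) (dP _ _ B1P B2P neB12)).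
Qed.

Lemma hpartition_refine H P B Q : hypergraph H -> hpartition H P -> B \in P ->
  hpartition B Q -> hpartition H ((P :\ B) :|: Q).
Proof.
move=> hH hP BP hQ; have sBH := hpartition_sub hP BP.
have sPQH C : C \in (P :\ B) :|: Q -> C \subset H.
  case/setUP=> [/setD1P[_ CP] | CQ]; first exact: hpartition_sub hP CP.
  exact: subset_trans (hpartition_sub hQ CQ) sBH.
have dPQ : {in (P :\ B) :|: Q &, forall C1 C2, C1 != C2 ->
    [disjoint carrier C1 & carrier C2]}.
  have dPB C D : C \in P :\ B -> D \in Q -> [disjoint carrier C & carrier D].
    case/setD1P=> neCB CP DQ; apply: disjointWr (carrierS (hpartition_sub hQ DQ)) _.
    exact: hpartition_disjoint hP CP BP neCB.
  move=> C1 C2 /setUP[C1P | C1Q] /setUP[C2P | C2Q] neC12.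
  - move: C1P C2P => /setD1P[_ C1P] /setD1P[_ C2P].
    exact: hpartition_disjoint hP C1P C2P neC12.
  - exact: dPB.
  - by rewrite disjoint_sym; apply: dPB.
  - exact: hpartition_disjoint hQ C1Q C2Q neC12.
apply: hpartitionI => //; last 2 first.
- exact: trivIset_hpartition hH sPQH dPQ.
- rewrite in_setU in_setD1 (negbTE (hpartition_set0 hP)).
  by rewrite (negbTE (hpartition_set0 hQ)) andbF.
case/andP: hP => /and3P[/eqP cPH tP _] _; case/andP: hQ => /and3P[/eqP cQB _ _] _.
rewrite /cover bigcup_setU -!/(cover _) coverD1 // cPH cQB.
by rewrite setUC -{1}(setIidPr sBH) setID.
Qed.

Lemma hpartition_refine_card H P B Q : hypergraph H -> hpartition H P -> B \in P ->
  hpartition B Q -> 1 < #|Q| -> #|P| < #|(P :\ B) :|: Q|.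
Proof.
move=> hH hP BP hQ ltQ1.
have dPQ : [disjoint P :\ B & Q].
  rewrite -setI_eq0; apply/set0Pn=> -[D /setIP[/setD1P[neDB DP] DQ]].
  have D0 : D != set0 by apply: contraNneq (hpartition_set0 hQ) => <-.
  have cD0 : carrier D != set0.
    by rewrite (hypergraph_carrier_eq0 (hypergraphS (hpartition_sub hP DP) hH)).
  have := subset_not_disjoint cD0 (carrierS (hpartition_sub hQ DQ)).
  by rewrite (hpartition_disjoint hP DP BP neDB).
rewrite cardsU (disjoint_setI0 dPQ) cards0 subn0 (cardsD1 B P) BP.
by rewrite addnC ltn_add2l.
Qed.

Lemma finest_hpartition_exists H : hypergraph H -> exists P, finest_hpartition H P.
Proof.
move=> hH; have [P hP maxP] :=
  @arg_maxnP _ _ (hpartition H) (fun P => #|P|) (hpartition_trivial H).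
exists P; apply/andP; split=> //; apply/forall_inP=> B BP; apply/connectedP=> A sAB dA.
have [-> | A0] := eqVneq A set0; first by left.
have [-> | AB] := eqVneq A B; first by right.
have hQ := hpartition_pair sAB A0 AB dA.
have ltQ1 : 1 < #|[set A; B :\: A]|.
  rewrite cards2 ltnS lt0b; apply: contraNneq A0 => eA.
  by rewrite -[A]setIid {2}eA setIDA setD_eq0 subsetIl.
have /= := maxP _ (hpartition_refine hH hP BP hQ).
by rewrite leqNgt (hpartition_refine_card hH hP BP hQ ltQ1).
Qed.

Lemma finest_hpartition_card H P :
  finest_hpartition H P -> ~~ connected H -> 1 < #|P|.
Proof.
case/andP=> /andP[/and3P[/eqP cPH _ _] _] /forall_inP conP.
rewrite ltnNge; apply: contra => leP1.
have [P0 | [B BP]] := set_0Vmem P.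
  move: cPH; rewrite P0 /cover big_set0 => <-; apply/connectedP=> A.
  by rewrite subset0 => /eqP-> _; left.
have /eqP PB : [set B] == P by rewrite eqEcard sub1set BP cards1.
by move: cPH; rewrite -PB cover1 => <-; apply: conP; rewrite -PB set11.
Qed.

Lemma atomic_restrict H Y : atomic H -> atomic (restrict H Y).
Proof.
move=> /forall_inP atH; apply/forall_inP=> x /carrierP[W WHY xW].
move: WHY; rewrite !restrictE sub1set => /andP[WH sWY].
by rewrite (subsetP sWY) // atH // (subsetP (sub_carrier WH)).
Qed.

Lemma hpartition_atomic H P B : atomic H -> hpartition H P -> B \in P -> atomic B.
Proof.
move=> /forall_inP atH hP BP; apply/forall_inP=> x xB.
have xH : x \in carrier H by rewrite (subsetP (carrierS (hpartition_sub hP BP))).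
have [B' B'P xB'] := hpartition_cover hP (atH x xH).
have [-> // | neBB'] := eqVneq B B'.
have xcB' : x \in carrier B' by rewrite (subsetP (sub_carrier xB')) ?set11.
by rewrite (disjointFr (hpartition_disjoint hP BP B'P neBB') xB) in xcB'.
Qed.

Lemma hpartition_carrier_lt H P B : hypergraph H -> hpartition H P -> B \in P ->
  1 < #|P| -> #|carrier B| < #|carrier H|.
Proof.
move=> hH hP BP /card_gt1P[B1 [B2 [B1P B2P neB12]]].
have [B' B'P neBB'] : exists2 B', B' \in P & B != B'.
  by have [eBB1 | ] := eqVneq B B1; [exists B2; rewrite // eBB1 | exists B1].
have hB' := hypergraphS (hpartition_sub hP B'P) hH.
have /set0Pn[y yB'] : carrier B' != set0.
  by rewrite (hypergraph_carrier_eq0 hB'); apply: contraNneq (hpartition_set0 hP) => <-.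
apply/proper_card/properP; split; first exact/carrierS/(hpartition_sub hP).
exists y; first exact: subsetP (carrierS (hpartition_sub hP B'P)) y yB'.
by rewrite (disjointFl (hpartition_disjoint hP BP B'P neBB') yB').
Qed.

Lemma unsplittable_block H P F : hpartition H P -> unsplittable F ->
  F \subset H -> F != set0 -> exists2 B, B \in P & F \subset B.
Proof.
move=> hP nsF sFH /set0Pn[Z ZF].
have [B BP ZB] := hpartition_cover hP (subsetP sFH Z ZF).
exists B => //.
have [// | sFHB] := unsplittable_side nsF sFH (hpartition_sub hP BP) (hpartition_split hP BP).
by have := subsetP sFHB Z ZF; rewrite inE ZB.
Qed.

Definition constructions_complete H :=
  (exists C, construction H C) /\
  forall X, connected_set H X -> exists2 C, construction H C & X \in C.

Lemma constructions_complete0 : constructions_complete set0.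
Proof.
split=> [|X cX]; first by exists set0; apply: constr_empty.
case: (cX) => X0 _ _; move: (connected_set_sub cX).
by rewrite /carrier /cover big_set0 subset0 (negbTE X0).
Qed.

Lemma constructions_complete_connected H :
    atomic H -> carrier H != set0 -> connected H ->
    (forall x, x \in carrier H -> constructions_complete (restrict H (carrier H :\ x))) ->
  constructions_complete H.
Proof.
move=> atH cH0 conH IH; have [x0 x0H] := set0Pn _ cH0.
have [[K0 cK0] _] := IH x0 x0H.
have cHK0 := constr_conn atH cH0 conH x0H cK0.
split=> [|X cHX]; first by exists (K0 :|: [set carrier H]).
have [-> | neXH] := eqVneq X (carrier H).
  by exists (K0 :|: [set carrier H]); rewrite // inE set11 orbT.
have [x xH xnX] : exists2 x, x \in carrier H & x \notin X.
  have : X \proper carrier H by rewrite properEneq neXH (connected_set_sub cHX).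
  by case/properP=> _ [x]; exists x.
have sX : X \subset carrier H :\ x by rewrite subsetD1 xnX (connected_set_sub cHX).
have [K cK XK] := (IH x xH).2 X (proj2 (connected_set_restrict H sX) cHX).
by exists (K :|: [set carrier H]); [apply: constr_conn cK | rewrite inE XK].
Qed.

Lemma constructions_complete_disconnected H P :
    hypergraph H -> atomic H -> ~~ connected H -> finest_hpartition H P ->
    (forall B, B \in P -> constructions_complete B) ->
  constructions_complete H.
Proof.
move=> hH atH dconH fP IH; have /andP[hP _] := fP.
have ltP1 := finest_hpartition_card fP dconH.
have /fin_all_exists[Ks cKs] : forall B, exists K, B \in P -> construction B K.
  move=> B; have [BP | BnP] := boolP (B \in P); last by exists set0.
  by have [[K cK] _] := IH B BP; exists K.
split=> [|X cHX]; first by exists (\bigcup_(B in P) Ks B); apply: constr_disc.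
have [X0 nsHX cHXX] := cHX.
have HX0 : restrict H X != set0 by apply: contraNneq X0 => HX0; rewrite -cHXX HX0 carrier0.
have [B0 B0P sHXB0] := unsplittable_block hP nsHX (restrict_sub H X) HX0.
have sXB0 : X \subset carrier B0 by rewrite -cHXX carrierS.
have [K0 cK0 XK0] := (IH B0 B0P).2 X (proj2 (hpartition_connected_set hH hP B0P sXB0) cHX).
exists (\bigcup_(B in P) (if B == B0 then K0 else Ks B)).
  by apply: constr_disc => // B BP; case: eqP => [-> | _]; last exact: cKs.
by apply/bigcupP; exists B0; rewrite ?eqxx.
Qed.

Lemma atomic_constructions_complete H : hypergraph H -> atomic H -> constructions_complete H.
Proof.
have [n] := ubnP #|carrier H|; elim: n H => // n IH H ltHn hH atH.
have [-> | H0] := eqVneq H set0; first exact: constructions_complete0.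
have cH0 : carrier H != set0 by rewrite hypergraph_carrier_eq0.
rewrite ltnS in ltHn; have [conH | dconH] := boolP (connected H).
  apply: constructions_complete_connected => // x xH; apply: IH.
  - apply: leq_trans ltHn; apply: leq_ltn_trans (subset_leq_card (carrier_restrict _ _)) _.
    exact: proper_card (properD1 xH).
  - exact: hypergraphS (restrict_sub _ _) hH.
  - exact: atomic_restrict.
have [P fP] := finest_hpartition_exists hH; have /andP[hP _] := fP.
apply: (constructions_complete_disconnected hH atH dconH fP) => B BP; apply: IH.
- apply: leq_trans ltHn; apply: hpartition_carrier_lt hH hP BP _.
  exact: finest_hpartition_card fP dconH.
- exact: hypergraphS (hpartition_sub hP BP) hH.
- exact: hpartition_atomic atH hP BP.
Qed.

End Hypergraphs.

Unset Implicit Arguments.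

Theorem proposition4p8 (T : finType) (H : {set {set T}}) :
  hypergraph H -> atomic H ->
  (exists Hbar : {set {set T}}, saturated Hbar /\ cognate H Hbar) /\
  (forall Hbar : {set {set T}}, saturated Hbar -> cognate H Hbar ->
     forall X : {set T},
       X \in Hbar <-> exists C : {set {set T}}, construction H C /\ X \in C).
Proof.
move=> hH atH; split=> [|Hbar satHbar cogHbar X]; first exact: saturated_cognate_exists.
have hHbar : hypergraph Hbar by rewrite -(cognate_hypergraph cogHbar).
have [_ complete] := atomic_constructions_complete hH atH.
have memHbar : X \in Hbar <-> connected_set H X.
  apply: iff_trans (iff_sym (cognate_connected_set X cogHbar hH)).
  by split=> [/(mem_connected_set hHbar) | /(connected_set_mem satHbar)].
split=> [/memHbar/complete[C cC XC] | [C [cC XC]]]; first by exists C.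
exact/memHbar/(construction_connected_set cC hH XC).
Qed.
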